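(* Let $G = T \oplus R$ be a splitting abelian group, where $T$ is the torsion subgroup of $G$ and $R$ is torsion-free. Then $G$ is semi-generalized Bassian if, and only if, both $T$ and $R$ are semi-generalized Bassian and, moreover, $T$ is divisible whenever the rank of $R$ is infinite.
   Context: All groups are additively written abelian groups. A subgroup $H$ of a group $A$ is essential in $A$ if $H \cap S \neq \{0\}$ for every non-zero subgroup $S$ of $A$. A group $G$ is semi-generalized Bassian if, for every subgroup $H \le G$, the existence of an injective homomorphism $G \to G/H$ implies that $H$ is an essential subgroup of some direct summand of $G$. *)

From mathcomp Require Import all_boot all_order all_algebra.
Set Implicit Arguments. Unset Strict Implicit. Unset Printing Implicit Defensive.
Import GRing.Theory.
Local Open Scope ring_scope.

Definition subgroup (G : zmodType) (H : G -> Prop) : Prop :=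
  H 0 /\ (forall x y, H x -> H y -> H (x - y)).

Definition direct_summand (G : zmodType) (D : G -> Prop) : Prop :=
  subgroup D /\
  exists C : G -> Prop, subgroup C /\
    (forall x, D x -> C x -> x = 0) /\
    (forall x, exists d c, D d /\ C c /\ x = d + c).

Definition essential_in (G : zmodType) (H A : G -> Prop) : Prop :=
  (forall x, H x -> A x) /\
  (forall S : G -> Prop, subgroup S -> (forall x, S x -> A x) ->
     (exists x, S x /\ x <> 0) -> exists x, H x /\ S x /\ x <> 0).

(* There is an injective homomorphism G -> G/H.  A map f : G -> G/H is
   described by a choice of representatives g : G -> G (f x = g x + H);
   f is additive iff g(x+y) - (g x + g y) lies in H, and f is injective iff
   g x + H = g y + H implies x = y. *)
Definition inj_hom_into_quotient (G : zmodType) (H : G -> Prop) : Prop :=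
  exists g : G -> G,
    (forall x y, H (g (x + y) - (g x + g y))) /\
    (forall x y, H (g x - g y) -> x = y).

Definition semi_generalized_Bassian (G : zmodType) : Prop :=
  forall H : G -> Prop, subgroup H -> inj_hom_into_quotient H ->
    exists D : G -> Prop, direct_summand D /\ essential_in H D.

Definition torsion_group (G : zmodType) : Prop :=
  forall x : G, exists n : nat, (0 < n)%N /\ x *+ n = 0.

Definition torsion_free (G : zmodType) : Prop :=
  forall (x : G) (n : nat), (0 < n)%N -> x *+ n = 0 -> x = 0.

Definition divisible (G : zmodType) : Prop :=
  forall (x : G) (n : nat), (0 < n)%N -> exists y : G, y *+ n = x.

Definition independent (G : zmodType) (n : nat) (x : 'I_n -> G) : Prop :=
  (forall i, x i <> 0) /\
  forall k : 'I_n -> int, \sum_(i < n) x i *~ k i = 0 -> forall i, x i *~ k i = 0.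

(* The (torsion-free) rank of G is infinite iff G contains independent
   families of every finite size (independence has finite character). *)
Definition infinite_rank (G : zmodType) : Prop :=
  forall n : nat, exists x : 'I_n -> G, independent x.

(* Let H be a subgroup of G = T * R such that G embeds into G/H.
   Necessity: for H inside one factor the embedding extends by the identity on the other,
   and an essential summand of G over H restricts to one of that factor, because R is
   torsion-free and T is torsion. If R has infinite rank and c in T is not divisible by n,
   maps from R to the divisible groups Q and Q[X] along an independent sequence x produce a
   torsion-free H containing (c, n x_0) and an embedding of G into G/H; a summand
   essentially containing H would force c into nT.
   Sufficiency: if R has finite rank, H lies in T (otherwise the images of independent
   elements would give independent families of every size), which reduces to T. If T is
   divisible, the projection of H to R is essential in a summand E_R of R, H meets T
   essentially in a divisible summand E of T, and a homomorphism R -> T induced by H shears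
   E * E_R into a summand of G in which H is essential. *)

From HB Require Import structures.
From mathcomp Require Import all_boot all_order all_algebra.
From mathcomp Require Import boolp classical_sets.
Set Implicit Arguments. Unset Strict Implicit. Unset Printing Implicit Defensive.
Import GRing.Theory Num.Theory.
Local Open Scope ring_scope.

Section Subgroups.
Variable G : zmodType.
Implicit Types (H S : G -> Prop) (x y : G).

Lemma subgroup0 H : subgroup H -> H 0. Proof. by case. Qed.

Lemma subgroupB H x y : subgroup H -> H x -> H y -> H (x - y).
Proof. by move=> [_ hB]; apply: hB. Qed.

Lemma subgroupN H x : subgroup H -> H x -> H (- x).
Proof. by move=> sH hx; rewrite -sub0r; apply: subgroupB => //; apply: subgroup0. Qed.

Lemma subgroupD H x y : subgroup H -> H x -> H y -> H (x + y).
Proof. by move=> sH hx hy; rewrite -[y]opprK; apply: subgroupB => //; apply: subgroupN. Qed.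

Lemma subgroupMn H x n : subgroup H -> H x -> H (x *+ n).
Proof.
move=> sH hx; elim: n => [|n IH]; first by rewrite mulr0n; apply: subgroup0.
by rewrite mulrS; apply: subgroupD.
Qed.

Lemma subgroupMz H x k : subgroup H -> H x -> H (x *~ k).
Proof.
move=> sH hx; case: k => n; first exact: subgroupMn.
by rewrite NegzE mulrNz; apply: subgroupN => //; apply: subgroupMn.
Qed.

Lemma subgroup_sum H (I : Type) (r : seq I) (P : pred I) (F : I -> G) :
  subgroup H -> (forall i, P i -> H (F i)) -> H (\sum_(i <- r | P i) F i).
Proof.
by move=> sH hF; apply: (big_ind H) => //; [apply: subgroup0 | move=> ? ?; apply: subgroupD].
Qed.

Lemma essential_inP H S : subgroup S ->
  essential_in H S <->
  (forall x, H x -> S x) /\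
  (forall x, S x -> x <> 0 -> exists k : int, H (x *~ k) /\ x *~ k <> 0).
Proof.
move=> sS; split=> [[HS ess]|[HS ess]]; split=> //.
  move=> x Sx x0.
  have sZx : subgroup (fun y => exists k : int, y = x *~ k).
    split; first by exists 0; rewrite mulr0z.
    by move=> _ _ [a ->] [b ->]; exists (a - b); rewrite mulrzBr.
  have [||y [Hy [[k ey] y0]]] := ess _ sZx; last by exists k; rewrite -ey.
  - by move=> _ [k ->]; apply: subgroupMz.
  - by exists x; split=> //; exists 1; rewrite mulr1z.
move=> S' sS' S'S [y [S'y y0]].
have [k [Hk k0]] := ess y (S'S _ S'y) y0.
by exists (y *~ k); split=> //; split=> //; apply: subgroupMz.
Qed.

Definition divisible_in S := forall x n, S x -> (0 < n)%N -> exists y, S y /\ y *+ n = x.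

Definition torsion_free_in S := forall x n, S x -> (0 < n)%N -> x *+ n = 0 -> x = 0.

Lemma essential_torsion_free_in H S : subgroup S -> essential_in H S ->
  torsion_free_in H -> torsion_free_in S.
Proof.
move=> sS /(essential_inP _ sS) [_ ess] tfH x n Sx n0 xn0; apply: contrapT => x0.
have [k [Hk []]] := ess x Sx x0.
by apply: (tfH _ n Hk n0); rewrite pmulrn mulrzAC -pmulrn xn0 mul0rz.
Qed.

Lemma torsion_in_complement D C x n : subgroup D -> subgroup C ->
  (forall y, D y -> C y -> y = 0) -> (exists d c, D d /\ C c /\ x = d + c) ->
  torsion_free_in D -> (0 < n)%N -> x *+ n = 0 -> C x.
Proof.
move=> sD sC DC [d [c [Dd [Cc ->]]]] tfD n0 xn0.
have dn0 : d *+ n = 0.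
  apply: DC; first exact: subgroupMn.
  have -> : d *+ n = - (c *+ n) by apply/eqP; rewrite -addr_eq0 -mulrnDl xn0.
  by apply: subgroupN => //; apply: subgroupMn.
by rewrite (tfD d n Dd n0 dn0) add0r.
Qed.

End Subgroups.

Lemma torsion_free_mulrz_eq0 (G : zmodType) (x : G) (k : int) : torsion_free G ->
  (x *~ k == 0) = (x == 0) || (k == 0).
Proof.
move=> tfG; apply/idP/idP => [|/orP [] /eqP ->]; rewrite ?mul0rz ?mulr0z //.
case: k => [[|n]|n]; first by rewrite orbT.
all: by rewrite ?NegzE ?mulrNz ?oppr_eq0 -pmulrn => /eqP /(tfG x n.+1 isT) ->; rewrite eqxx.
Qed.

Definition subset_chain (T : Type) (F : (T -> Prop) -> Prop) :=
  forall X Y, F X -> F Y -> (forall t, X t -> Y t) \/ (forall t, Y t -> X t).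

Definition chain_union (T : Type) (F : (T -> Prop) -> Prop) (t : T) := exists X, F X /\ X t.

Lemma Zorn_chain_union (T : Type) (P : (T -> Prop) -> Prop) (X0 : T -> Prop) :
  P X0 ->
  (forall F, (forall X, F X -> P X) -> (exists X, F X) -> subset_chain F -> P (chain_union F)) ->
  exists M, P M /\ (forall N, P N -> (forall t, M t -> N t) -> forall t, N t -> M t).
Proof.
move=> P0 Pch; pose S := {X : T -> Prop | P X}.
pose R (a b : S) := `[< forall t, sval a t -> sval b t >].
have [||A totA|[M PM] maxM] := @ZL_preorder S (exist _ X0 P0) R.
- by move=> a; apply/asboolP.
- by move=> a b c /asboolP ab /asboolP bc; apply/asboolP => t /ab /bc.
- have [[a Aa]|nA] := pselect (exists a, A a); last first.
    by exists (exist _ X0 P0) => s As; case: nA; exists s.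
  have PU : P (fun t => exists X, (exists s : S, A s /\ sval s = X) /\ X t).
    apply: Pch; first by move=> X [s [_ <-]]; exact: (svalP s).
      by exists (sval a), a.
    move=> X Y [s [As <-]] [s' [As' <-]].
    by have [/asboolP|/asboolP] := totA s s' As As'; [left|right].
  exists (exist _ _ PU) => s As; apply/asboolP => t st /=.
  by exists (sval s); split=> //; exists s.
exists M; split=> // N PN MN.
by have /asboolP := maxM (exist _ N PN) (introT (asboolP _) MN).
Qed.

Lemma subgroup_chain_union (G : zmodType) (F : (G -> Prop) -> Prop) :
  (forall X, F X -> subgroup X) -> (exists X, F X) -> subset_chain F ->
  subgroup (chain_union F).
Proof.
move=> Fs [X0 FX0] tot; split; first by exists X0; split=> //; exact: subgroup0 (Fs _ FX0).
move=> p q [X [FX Xp]] [Y [FY Yq]].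
have [XY|YX] := tot _ _ FX FY.
- by exists Y; split=> //; apply: subgroupB (Fs _ FY) (XY _ Xp) Yq.
- by exists X; split=> //; apply: subgroupB (Fs _ FX) Xp (YX _ Yq).
Qed.

Lemma subrACA (V : zmodType) (a b c d : V) : (a - b) - (c - d) = (a - c) - (b - d).
Proof. by rewrite !opprD !opprK addrACA. Qed.

Lemma pairD (A B : zmodType) (a a' : A) (b b' : B) :
  ((a, b) : A * B) + (a', b') = (a + a', b + b').
Proof. by []. Qed.

Lemma pairN (A B : zmodType) (a : A) (b : B) : - ((a, b) : A * B) = (- a, - b).
Proof. by []. Qed.

Lemma pairB (A B : zmodType) (a a' : A) (b b' : B) :
  ((a, b) : A * B) - (a', b') = (a - a', b - b').
Proof. by []. Qed.

Lemma pairMzE (A B : zmodType) (p : A * B) (k : int) : p *~ k = (p.1 *~ k, p.2 *~ k).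
Proof. by rewrite [LHS]surjective_pairing -!raddfMz. Qed.

Definition additive_mod (G : zmodType) (H : G -> Prop) (g : G -> G) :=
  forall x y, H (g (x + y) - (g x + g y)).

Definition injective_mod (G : zmodType) (H : G -> Prop) (g : G -> G) :=
  forall x y, H (g x - g y) -> x = y.

Section AdditiveMod.
Variables (G : zmodType) (H : G -> Prop) (g : G -> G).
Hypotheses (sH : subgroup H) (gD : additive_mod H g).

Lemma additive_mod0 : H (g 0).
Proof.
by have := subgroupN sH (gD 0 0); rewrite addr0 opprB addrK.
Qed.

Lemma additive_modN x : H (g (- x) + g x).
Proof.
have := subgroupB sH additive_mod0 (gD x (- x)).
by rewrite subrr opprB addrC subrK addrC.
Qed.

Lemma additive_modMn x n : H (g (x *+ n) - g x *+ n).
Proof.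
elim: n => [|n IH]; first by rewrite !mulr0n subr0; exact: additive_mod0.
have := subgroupD sH (gD x (x *+ n)) IH.
by rewrite opprD [g (x + _) + _]addrA subrKA -addrA -opprD -!mulrS.
Qed.

Lemma additive_modMz x k : H (g (x *~ k) - g x *~ k).
Proof.
case: k => n; first exact: additive_modMn.
rewrite !NegzE !mulrNz.
have := subgroupB sH (additive_modN (x *+ n.+1)) (additive_modMn x n.+1).
by rewrite opprB addrA addrAC addrK opprK.
Qed.

Lemma additive_mod_sum (I : Type) (r : seq I) (F : I -> G) :
  H (g (\sum_(i <- r) F i) - \sum_(i <- r) g (F i)).
Proof.
elim: r => [|a r IH]; first by rewrite !big_nil subr0; exact: additive_mod0.
have := subgroupD sH (gD (F a) (\sum_(i <- r) F i)) IH.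
by rewrite !big_cons opprD [g (F a + _) + _]addrA subrKA -addrA -opprD.
Qed.

Hypothesis gI : injective_mod H g.

Lemma injective_mod_sum (I : Type) (r : seq I) (y : I -> G) (c : I -> int) :
  H (\sum_(i <- r) g (y i) *~ c i) -> \sum_(i <- r) y i *~ c i = 0.
Proof.
move=> Hs; apply: gI; rewrite -[X in H X](subrKA (\sum_(i <- r) g (y i *~ c i))).
apply: subgroupD sH _ _; first exact: additive_mod_sum.
rewrite -(subrKA (\sum_(i <- r) g (y i) *~ c i)).
apply: subgroupD sH _ _; last by apply: subgroupB sH Hs additive_mod0.
by rewrite -sumrB; apply: subgroup_sum sH _ => i _; apply: additive_modMz.
Qed.

End AdditiveMod.

Lemma subgroup_eq0 (G : zmodType) : subgroup (fun x : G => x = 0).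
Proof. by split=> // x y -> ->; rewrite subr0. Qed.

Lemma direct_summand_eq0 (G : zmodType) : direct_summand (fun x : G => x = 0).
Proof.
split; first exact: subgroup_eq0.
exists (fun _ => True); split; first by [].
by split=> // x; exists 0, x; rewrite add0r.
Qed.

Section Products.
Variables A B : zmodType.
Implicit Types (SA : A -> Prop) (SB : B -> Prop) (D H : A * B -> Prop).

Lemma subgroup_prod SA SB : subgroup SA -> subgroup SB ->
  subgroup (fun p : A * B => SA p.1 /\ SB p.2).
Proof.
move=> sA sB; split; first by split; apply: subgroup0.
by move=> p q [? ?] [? ?]; split; apply: subgroupB.
Qed.

Lemma subgroup_slicel D : subgroup D -> subgroup (fun a => D (a, 0)).
Proof.
move=> sD; split=> [|a a' Da Da']; first exact: (subgroup0 sD).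
by rewrite -[X in (_, X)](subrr (0 : B)); exact: (subgroupB sD Da Da').
Qed.

Lemma subgroup_slicer D : subgroup D -> subgroup (fun b => D (0, b)).
Proof.
move=> sD; split=> [|b b' Db Db']; first exact: (subgroup0 sD).
by rewrite -[X in (X, _)](subrr (0 : A)); exact: (subgroupB sD Db Db').
Qed.

Lemma subgroup_proj2 D : subgroup D -> subgroup (fun b => exists a, D (a, b)).
Proof.
move=> sD; split=> [|b b' [a Dab] [a' Dab']]; first by exists 0; exact: (subgroup0 sD).
by exists (a - a'); exact: (subgroupB sD Dab Dab').
Qed.

Lemma direct_summand_prod SA SB : direct_summand SA -> direct_summand SB ->
  direct_summand (fun p : A * B => SA p.1 /\ SB p.2).
Proof.
move=> [sA [CA [sCA [ACA decA]]]] [sB [CB [sCB [BCB decB]]]].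
split; first exact: subgroup_prod.
exists (fun p => CA p.1 /\ CB p.2); split; first exact: subgroup_prod.
split=> [[a b] [/= Da Db] [/= Ca Cb]|[a b]].
  by rewrite (ACA a Da Ca) (BCB b Db Cb).
have [da [ca [Da [Ca ->]]]] := decA a; have [db [cb [Db [Cb ->]]]] := decB b.
by exists (da, db), (ca, cb).
Qed.

Lemma inj_hom_into_quotient_prodl SA : inj_hom_into_quotient SA ->
  inj_hom_into_quotient (fun p : A * B => SA p.1 /\ p.2 = 0).
Proof.
move=> [g [gD gI]]; exists (fun p => (g p.1, p.2)); split.
  by move=> p q; split; [exact: gD | rewrite /= subrr].
by move=> [a b] [a' b'] [/= /gI -> /eqP]; rewrite subr_eq0 => /eqP ->.
Qed.

Lemma inj_hom_into_quotient_prodr SB : inj_hom_into_quotient SB ->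
  inj_hom_into_quotient (fun p : A * B => p.1 = 0 /\ SB p.2).
Proof.
move=> [g [gD gI]]; exists (fun p => (p.1, g p.2)); split.
  by move=> p q; split; [rewrite /= subrr | exact: gD].
by move=> [a b] [a' b'] [/= /eqP + /gI ->]; rewrite subr_eq0 => /eqP ->.
Qed.

Lemma essential_in_prodl SA DA : subgroup DA -> essential_in SA DA ->
  essential_in (fun p : A * B => SA p.1 /\ p.2 = 0) (fun p => DA p.1 /\ p.2 = 0).
Proof.
move=> sDA /(essential_inP _ sDA) [SD ess].
apply/essential_inP; first exact: (subgroup_prod sDA (subgroup_eq0 B)).
split=> [p [/SD ? ?] //|[a b] [/= Da ->] p0].
have a0 : a <> 0 by move=> a0; apply: p0; rewrite a0.
have [k [Hk k0]] := ess a Da a0.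
by exists k; rewrite pairMzE /= mul0rz; split=> // -[].
Qed.

Lemma essential_in_slicel SA D : subgroup D ->
  essential_in (fun p : A * B => SA p.1 /\ p.2 = 0) D -> essential_in SA (fun a => D (a, 0)).
Proof.
move=> sD /(essential_inP _ sD) [HD ess].
have sDA := subgroup_slicel sD.
apply/(essential_inP SA sDA); split=> [a Ha|a Da a0]; first exact: (HD (a, 0)).
have [|k [[Hk _] k0]] := ess (a, 0) Da; first by case.
by exists k; rewrite pairMzE /= in Hk k0; split=> // ak0; apply: k0; rewrite ak0 mul0rz.
Qed.

Lemma essential_in_proj2 SB D : subgroup D ->
  essential_in (fun p : A * B => p.1 = 0 /\ SB p.2) D ->
  essential_in SB (fun b => exists a, D (a, b)).
Proof.
move=> sD /(essential_inP _ sD) [HD ess].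
split=> [b Hb|S sS SD [b [Sb b0]]]; first by exists 0; apply: HD.
have [a Dab] := SD b Sb.
have [|k [[Hk1 Hk2] k0]] := ess (a, b) Dab; first by case.
rewrite pairMzE /= in Hk1 Hk2 k0; rewrite Hk1 in k0.
exists (b *~ k); split=> //; split; first exact: subgroupMz.
by move=> bk0; apply: k0; rewrite bk0.
Qed.

Lemma direct_summand_slicel D : direct_summand D -> (forall p, D p -> p.2 = 0) ->
  direct_summand (fun a => D (a, 0)).
Proof.
move=> [sD [C [sC [DC dec]]]] D2.
split; first exact: subgroup_slicel.
exists (fun a => C (a, 0)); split; first exact: subgroup_slicel.
split=> [a Da Ca|a]; first by case: (DC _ Da Ca).
have [[da db] [[ca cb] [Dd [Cc [/= ea eb]]]]] := dec (a, 0).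
have db0 : db = 0 by exact: (D2 _ Dd).
have cb0 : cb = 0 by rewrite eb db0 add0r.
by exists da, ca; rewrite -db0 {2}db0 -cb0.
Qed.

Lemma direct_summand_proj2 D : torsion_group A -> direct_summand D -> torsion_free_in D ->
  direct_summand (fun b => exists a, D (a, b)).
Proof.
move=> tA [sD [C [sC [DC dec]]]] tfD.
have CA a : C (a, 0).
  have [n [n0 an0]] := tA a.
  by apply: (torsion_in_complement sD sC DC (dec _) tfD n0); rewrite pairMnE an0 mul0rn.
split; first exact: subgroup_proj2.
exists (fun b => C (0, b)); split; first exact: subgroup_slicer.
split=> [b [a Dab] Cb|b].
  have Cab : C (a, b).
    by rewrite -[a]addr0 -[b]add0r; exact: (subgroupD sC (CA a) Cb).
  by case: (DC _ Dab Cab).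
have [[da db] [[ca cb] [Dd [Cc [/= ea eb]]]]] := dec (0, b).
exists db, cb; split; first by exists da.
split=> //; rewrite -(subrr ca) -[cb]subr0; exact: (subgroupB sC Cc (CA ca)).
Qed.

End Products.

Lemma semi_generalized_Bassian_prodl (A B : zmodType) : torsion_free B ->
  semi_generalized_Bassian (A * B)%type -> semi_generalized_Bassian A.
Proof.
move=> tfB sgb H sH injH.
have [D [sumD essD]] :=
  sgb _ (subgroup_prod sH (subgroup_eq0 B)) (inj_hom_into_quotient_prodl B injH).
have sD := sumD.1; have [_ ess] := (essential_inP _ sD).1 essD.
have D2 p : D p -> p.2 = 0.
  move=> Dp; apply/eqP/negPn/negP => p2.
  have [|k [[_ /eqP]]] := ess p Dp; first by move=> p0; rewrite p0 eqxx in p2.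
  rewrite pairMzE /= torsion_free_mulrz_eq0 // (negbTE p2) /= => /eqP -> [].
  by rewrite mulr0z.
by exists (fun a => D (a, 0)); split; [exact: direct_summand_slicel | exact: essential_in_slicel].
Qed.

Lemma semi_generalized_Bassian_prodr (A B : zmodType) : torsion_group A -> torsion_free B ->
  semi_generalized_Bassian (A * B)%type -> semi_generalized_Bassian B.
Proof.
move=> tA tfB sgb H sH injH.
have [D [sumD essD]] :=
  sgb _ (subgroup_prod (subgroup_eq0 A) sH) (inj_hom_into_quotient_prodr A injH).
have tfD : torsion_free_in D.
  apply: (essential_torsion_free_in sumD.1 essD) => -[a b] n [/= -> _] n0.
  by rewrite pairMnE /= => -[_ /(tfB b n n0) ->].
exists (fun b => exists a, D (a, b)).
by split; [exact: direct_summand_proj2 | exact: essential_in_proj2 sumD.1 essD].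
Qed.

Section BaerExtension.
Variables (A D : zmodType) (Dp : D -> Prop).
Hypotheses (sDp : subgroup Dp) (divDp : divisible_in Dp).

Definition partial_hom_graph (M : A * D -> Prop) :=
  [/\ subgroup M, forall d, M (0, d) -> d = 0 & forall p, M p -> Dp p.2].

Lemma partial_hom_graph_functional M p q : partial_hom_graph M ->
  M p -> M q -> p.1 = q.1 -> p.2 = q.2.
Proof.
move=> [sM M0 _] Mp Mq pq; apply/eqP; rewrite -subr_eq0; apply/eqP; apply: M0.
by rewrite -(subrr p.1) {2}pq -!raddfB -surjective_pairing; exact: subgroupB.
Qed.

Lemma partial_hom_graph_chain (F : (A * D -> Prop) -> Prop) :
  (forall X, F X -> partial_hom_graph X) -> (exists X, F X) -> subset_chain F ->
  partial_hom_graph (chain_union F).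
Proof.
move=> FP nF tot; split.
- by apply: subgroup_chain_union nF tot => X /FP [].
- by move=> d [X [FX Xd]]; case: (FP _ FX) => _ h _; apply: h.
- by move=> p [X [FX Xp]]; case: (FP _ FX) => _ _ h; apply: h.
Qed.

Lemma partial_hom_graph_multiples M a : partial_hom_graph M ->
  exists m e, [/\ M (a *+ m, e *+ m), Dp e & forall n d, M (a *+ n, d) -> (m %| n)%N].
Proof.
move=> [sM M0 MD].
have [[n [n0 [d Mnd]]]|none] := pselect (exists n, (0 < n)%N /\ exists d, M (a *+ n, d)).
  have exP : exists n, `[< (0 < n)%N /\ exists d, M (a *+ n, d) >].
    by exists n; apply/asboolP; split=> //; exists d.
  case: (ex_minnP exP) => m /asboolP [m0 [dm Mm]] mmin.
  have [e [De edm]] := divDp (MD _ Mm) m0.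
  exists m, e; split=> //; first by rewrite edm.
  move=> k dk Mk; rewrite /dvdn; apply: contraT; rewrite -lt0n => km0.
  have Mkm : M (a *+ (k %% m), dk - dm *+ (k %/ m)).
    have := subgroupB sM Mk (subgroupMn (k %/ m) sM Mm).
    rewrite pairMnE pairB /= -mulrnA {1}(divn_eq k m) mulrnDr mulnC.
    by rewrite [_ + a *+ (k %% m)]addrC addrK.
  have := mmin _ (introT (asboolP _) (conj km0 (ex_intro _ _ Mkm))).
  by rewrite leqNgt ltn_pmod.
exists 0%N, 0; split; first by rewrite !mulr0n; exact: (subgroup0 sM).
  exact: subgroup0.
by move=> [|n] d Mnd //; case: none; exists n.+1; split=> //; exists d.
Qed.

Lemma partial_hom_graph_extend M a : partial_hom_graph M ->
  exists M', [/\ partial_hom_graph M', forall p, M p -> M' p & exists e, M' (a, e)].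
Proof.
move=> gM; have [m [e [Mm De mdvd]]] := partial_hom_graph_multiples a gM.
have [sM M0 MD] := gM.
have valueMn n d : M (a *+ n, d) -> d = e *+ n.
  move=> Mn; have /dvdnP [q nq] := mdvd n d Mn.
  have Mq := subgroupMn q sM Mm; rewrite pairMnE -!mulrnA mulnC -nq in Mq.
  exact: (partial_hom_graph_functional gM Mn Mq).
have value k d : M (a *~ k, d) -> d = e *~ k.
  case: k => n; first exact: valueMn.
  rewrite NegzE !mulrNz -!pmulrn => /(subgroupN sM); rewrite pairN opprK.
  by move=> /valueMn <-; rewrite opprK.
pose M' p := exists q k, M q /\ p = q + (a, e) *~ k.
exists M'; split.
- split.
  + split; first by exists 0, 0; split; [exact: subgroup0 | rewrite mulr0z addr0].
    move=> _ _ [q [k [Mq ->]]] [q' [k' [Mq' ->]]].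
    exists (q - q'), (k - k'); split; first exact: subgroupB.
    by rewrite mulrzBr opprD addrACA.
  + move=> d [q [k [Mq qk]]].
    have qE : q = (a *~ - k, d - e *~ k).
      by rewrite -[q](addrK ((a, e) *~ k)) -qk pairMzE pairB sub0r mulrNz.
    rewrite qE in Mq; move: (value _ _ Mq); rewrite mulrNz.
    by move=> /(congr1 (+%R^~ (e *~ k))) /=; rewrite subrK addNr.
  + move=> _ [q [k [Mq ->]]]; rewrite raddfD pairMzE /=.
    by apply: subgroupD sDp (MD _ Mq) _; exact: subgroupMz.
- by move=> p Mp; exists p, 0; rewrite mulr0z addr0.
- by exists e, 0, 1; split; [exact: subgroup0 | rewrite mulr1z add0r].
Qed.

Theorem Baer_extension (M0 : A * D -> Prop) : partial_hom_graph M0 ->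
  exists F : {additive A -> D}, (forall a, Dp (F a)) /\ (forall p, M0 p -> F p.1 = p.2).
Proof.
move=> gM0.
have [F FP nF tot|M [[gM M0M] maxM]] := @Zorn_chain_union _
    (fun M => partial_hom_graph M /\ forall p, M0 p -> M p) M0 (conj gM0 (fun _ h => h)).
  split; first by apply: partial_hom_graph_chain nF tot => X /FP [].
  by case: nF => X FX p M0p; exists X; split=> //; exact: (FP X FX).2.
have dom a : exists d, M (a, d).
  have [M' [gM' MM' [e M'e]]] := partial_hom_graph_extend a gM.
  by exists e; apply: (maxM M') => //; split=> // p /M0M /MM'.
pose f a := sval (cid (dom a)).
have Mf a : M (a, f a) by rewrite /f; case: cid.
have [sM _ MD] := gM.
have fB : zmod_morphism f.
  move=> a b.
  exact: (partial_hom_graph_functional gM (Mf (a - b)) (subgroupB sM (Mf a) (Mf b))).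
pose F : {additive A -> D} := HB.pack f (GRing.isZmodMorphism.Build A D f fB).
exists F; split=> [a|p M0p].
  exact: (MD _ (Mf a)).
exact: (partial_hom_graph_functional gM (Mf p.1) (M0M _ M0p)).
Qed.

End BaerExtension.

Section Independence.
Variable G : zmodType.
Implicit Types (x : nat -> G) (N : nat).

Definition independent_upto x N :=
  forall k : nat -> int, \sum_(i < N) x i *~ k i = 0 -> forall i, (i < N)%N -> k i = 0.

Definition independent_seq x := forall N, independent_upto x N.

Lemma dependent_cons (j1 : nat) (J : seq nat) (y : nat -> G) : j1 \notin J ->
  (exists c : nat -> int, (exists2 j, j \in J & c j != 0) /\ \sum_(j <- J) y j *~ c j = 0) ->
  exists c : nat -> int,
    (exists2 j, j \in j1 :: J & c j != 0) /\ \sum_(j <- j1 :: J) y j *~ c j = 0.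
Proof.
move=> j1J [c [[j jJ cj] hc]]; exists (fun j => if j \in J then c j else 0); split.
  by exists j; rewrite ?inE ?jJ ?orbT.
rewrite big_cons (negbTE j1J) mulr0z add0r -[RHS]hc.
by apply: eq_big_seq => j2 ->.
Qed.

Lemma dependent_in_small_span (k : nat) (J : seq nat) (y : nat -> G) (m : nat -> int)
    (a : nat -> nat -> int) x :
  uniq J -> size J = k.+1 -> (forall j, j \in J -> m j != 0) ->
  (forall j, j \in J -> y j *~ m j = \sum_(i < k) x i *~ a j i) ->
  exists c : nat -> int, (exists2 j, j \in J & c j != 0) /\ \sum_(j <- J) y j *~ c j = 0.
Proof.
elim: k J y m a => [|k IH] J y m a uJ sJ mnz hy.
  case: J uJ sJ mnz hy => [|j [|]] //= _ _ mnz hy.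
  exists m; split; first by exists j; rewrite ?inE ?mnz ?inE.
  by rewrite big_seq1 hy ?inE // big_ord0.
have [[j0 j0J aj0]|nex] := pselect (exists2 j, j \in J & a j k != 0); last first.
  case: J uJ sJ mnz hy nex => [|j1 J'] //= /andP [j1J' uJ'] [sJ'] mnz hy nex.
  apply: dependent_cons j1J' _; apply: (IH J' y m a) => // j jJ.
    by apply: mnz; rewrite inE jJ orbT.
  rewrite hy ?inE ?jJ ?orbT // big_ord_recr /=.
  have -> : a j k = 0 by apply/eqP/negPn/negP => ajk; apply: nex; exists j; rewrite ?inE ?jJ ?orbT.
  by rewrite mulr0z addr0.
(* Eliminate [x k] between [y j0] and the other [y j]: the [k.+1] elements [y2 j],
   [j \in J'], lie in the span of [x 0], ..., [x k.-1]. *)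
pose J' := rem j0 J.
have J'J j : j \in J' -> j \in J by apply: mem_rem.
have j0J' : j0 \notin J' by rewrite mem_rem_uniqF.
have neq_j0 j : j \in J' -> (j == j0) = false by move=> jJ; apply: contraNF j0J' => /eqP <-.
pose y2 j := y j *~ (a j0 k * m j) - y j0 *~ (a j k * m j0).
pose a2 j i := a j0 k * a j i - a j k * a j0 i.
have [|||c [[j1 j1J c1] hc]] := IH J' y2 (fun _ => 1) a2 (rem_uniq _ uJ).
- by rewrite size_rem // sJ.
- by move=> j _; rewrite oner_eq0.
- move=> j jJ; rewrite mulr1z /y2 -!mulrzA_C (hy j (J'J _ jJ)) (hy j0 j0J).
  rewrite !big_ord_recr /= !mulrzDl !mulrz_suml /a2.
  under [in RHS]eq_bigr => i _ do rewrite mulrzBr -!mulrzA_C.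
  by rewrite sumrB opprD addrACA [x k *~ a j k *~ a j0 k]mulrzAC subrr addr0.
exists (fun j => if j == j0 then - \sum_(j' <- J') c j' * a j' k * m j0
                 else c j * (a j0 k * m j)); split.
  exists j1; first exact: J'J.
  by rewrite neq_j0 // !mulf_neq0 // mnz // J'J.
rewrite (big_rem j0 j0J) /= eqxx /=.
rewrite (eq_big_seq (fun j => y j *~ (c j * (a j0 k * m j)))); last first.
  by move=> j jJ; rewrite neq_j0.
have hc2 : \sum_(j <- J') y j *~ (c j * (a j0 k * m j))
    - \sum_(j <- J') y j0 *~ (c j * a j k * m j0) = 0.
  rewrite -[RHS]hc -sumrB; apply: eq_bigr => j _.
  by rewrite /y2 mulrzBl !mulrzA_C !mulrA.
by rewrite mulrNz mulrz_sumr addrC.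
Qed.

Hypothesis tfG : torsion_free G.

Lemma independent_upto_extend x N : independent_upto x N ->
  (exists f : 'I_N.+1 -> G, independent f) ->
  exists y, independent_upto (fun i => if i == N then y else x i) N.+1.
Proof.
move=> ix [f [fnz fi]]; apply: contrapT => none.
pose upd j i := if i == N then f (inord j) else x i.
have hK j : exists k : nat -> int,
    \sum_(i < N.+1) upd j i *~ k i = 0 /\ exists2 i, (i < N.+1)%N & k i <> 0.
  apply: contrapT => hn; apply: none; exists (f (inord j)) => k hk i iN.
  by apply: contrapT => ki; apply: hn; exists k; split=> //; exists i.
have [K KP] := choice hK.
have KE j : \sum_(i < N) x i *~ K j i + f (inord j) *~ K j N = 0.
  have [e _] := KP j; rewrite big_ord_recr /= /upd eqxx in e; rewrite -[RHS]e.
  by congr (_ + _); apply: eq_bigr => i _; rewrite ifN // neq_ltn ltn_ord.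
have KN j : K j N != 0.
  apply/eqP => KjN; have [_ [i iN]] := KP j; apply.
  move: (KE j); rewrite KjN mulr0z addr0 => /ix Ki.
  by move: iN; rewrite ltnS leq_eqVlt => /orP [/eqP ->|/Ki].
have [||c [[j jN cj] hc]] := @dependent_in_small_span N (iota 0 N.+1) (fun j => f (inord j))
    (fun j => K j N) (fun j i => - K j i) x (iota_uniq 0 N.+1) (size_iota 0 N.+1).
- by move=> j _; apply: KN.
- move=> j _; under eq_bigr => i _ do rewrite mulrNz.
  by rewrite sumrN; apply: (addrI (\sum_(i < N) x i *~ K j i)); rewrite KE subrr.
have hc' : \sum_(j < N.+1) f j *~ c j = 0.
  rewrite -[RHS]hc (_ : iota 0 N.+1 = index_iota 0 N.+1) ?big_mkord; last first.
    by rewrite /index_iota subn0.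
  by apply: eq_bigr => j2 _; rewrite inord_val.
move: jN; rewrite mem_iota add0n => jN.
have /eqP := fi c hc' (inord j); rewrite inordK // torsion_free_mulrz_eq0 //.
by rewrite (negbTE cj) orbF => /eqP /fnz.
Qed.

Fixpoint independent_prefix (n : nat) : nat -> G :=
  if n is n'.+1 then
    let s := independent_prefix n' in
    if pselect (exists y, independent_upto (fun i => if i == n' then y else s i) n)
    is left h then fun i => if i == n' then sval (cid h) else s i else s
  else fun _ => 0.

Lemma independent_prefix_stable n m i : (i < n)%N -> (n <= m)%N ->
  independent_prefix m i = independent_prefix n i.
Proof.
move=> iN; elim: m => [|m IH]; first by rewrite leqn0 => /eqP ->.
rewrite leq_eqVlt => /orP [/eqP ->//|]; rewrite ltnS => nm.
by rewrite /=; case: pselect => [h|_] /=; rewrite ?ifN ?IH // neq_ltn (leq_trans iN nm).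
Qed.

Lemma infinite_rank_independent_seq : infinite_rank G -> exists x, independent_seq x.
Proof.
move=> ir.
have indep n : independent_upto (independent_prefix n) n.
  elim: n => [|n IH]; first by move=> k _ i.
  have [y hy] := independent_upto_extend IH (ir n.+1).
  by rewrite /=; case: pselect => [h|[]]; [case: (cid h) | exists y].
exists (fun i => independent_prefix i.+1 i) => N k hk.
apply: indep; rewrite -[RHS]hk; apply: eq_bigr => i _.
by rewrite (independent_prefix_stable (ltnSn i) (ltn_ord i)).
Qed.

End Independence.

Definition lincomb (G : zmodType) (x : nat -> G) (N : nat) (k : nat -> int) :=
  \sum_(i < N) x i *~ k i.

Lemma lincomb_widen (G : zmodType) (x : nat -> G) N L (k : nat -> int) : (N <= L)%N ->
  lincomb x N k = lincomb x L (fun i => if (i < N)%N then k i else 0).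
Proof.
move=> NL; rewrite /lincomb (big_ord_widen _ (fun i => x i *~ k i) NL) big_mkcond.
by apply: eq_bigr => i _; case: ifP; rewrite ?mulr0z.
Qed.

Lemma lincombB (G : zmodType) (x : nat -> G) N (k k' : nat -> int) :
  lincomb x N k - lincomb x N k' = lincomb x N (fun i => k i - k' i).
Proof. by rewrite /lincomb -sumrB; apply: eq_bigr => i _; rewrite mulrzBr. Qed.

Lemma lincomb_sub N M (k k' : nat -> int) : exists L k'',
  forall (G : zmodType) (x : nat -> G), lincomb x N k - lincomb x M k' = lincomb x L k''.
Proof.
exists (maxn N M), (fun i => (if (i < N)%N then k i else 0) - if (i < M)%N then k' i else 0).
move=> G x; rewrite (lincomb_widen _ k (leq_maxl N M)) (lincomb_widen _ k' (leq_maxr N M)).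
exact: lincombB.
Qed.

Lemma lincomb_delta (G : zmodType) (x : nat -> G) i : lincomb x i.+1 (fun j => (j == i)%:R) = x i.
Proof.
rewrite /lincomb big_ord_recr /= eqxx mulr1z big1 ?add0r // => j _.
by rewrite (ltn_eqF (ltn_ord j)) mulr0z.
Qed.

Section Span.
Variable G : zmodType.
Implicit Types (x : nat -> G) (k : nat -> int).

Lemma additive_lincomb (W : zmodType) (F : {additive G -> W}) x N k :
  F (lincomb x N k) = lincomb (F \o x) N k.
Proof. by rewrite /lincomb raddf_sum; apply: eq_bigr => i _; rewrite raddfMz. Qed.

Definition span x (y : G) := exists N k, y = lincomb x N k.

Lemma subgroup_span x : subgroup (span x).
Proof.
split; first by exists 0%N, (fun _ => 0); rewrite /lincomb big_ord0.
move=> _ _ [N [k ->]] [M [k' ->]].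
by have [L [k'' ->]] := lincomb_sub N M k k'; exists L, k''.
Qed.

Lemma span_gen x i : span x (x i).
Proof. by exists i.+1, (fun j => (j == i)%:R); rewrite lincomb_delta. Qed.

Lemma independent_seq_extend (W : zmodType) x (w : nat -> W) :
  independent_seq x -> divisible W -> exists F : {additive G -> W}, forall i, F (x i) = w i.
Proof.
move=> ix divW.
pose M0 (p : G * W) := exists N k, p = (lincomb x N k, lincomb w N k).
have [|||F [_ FM0]] := @Baer_extension G W (fun _ => True) _ _ M0.
- by split.
- by move=> d m _ m0; have [e ed] := divW d m m0; exists e.
- split=> //.
    split; first by exists 0%N, (fun _ => 0); rewrite /lincomb !big_ord0.
    move=> _ _ [N [k ->]] [M [k' ->]].
    by have [L [k'' e]] := lincomb_sub N M k k'; exists L, k''; rewrite pairB !e.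
  move=> d [N [k [/esym/ix k0 ->]]].
  by rewrite /lincomb big1 // => i _; rewrite k0 ?mulr0z.
have M0x i : M0 (x i, w i).
  by rewrite /M0; exists i.+1, (fun j => (j == i)%:R); rewrite !lincomb_delta.
by exists F => i; exact: (FM0 _ (M0x i)).
Qed.

End Span.

Lemma divisible_lmod (F : numFieldType) (V : lmodType F) : divisible V.
Proof.
move=> v n n0; exists (n%:R^-1 *: v).
by rewrite scalerMnl -mulr_natr mulVf ?scale1r // pnatr_eq0 -lt0n.
Qed.

Lemma essential_summand_divides (A B : zmodType) (H D : A * B -> Prop) c r n :
  torsion_group A -> subgroup H -> torsion_free_in H -> direct_summand D ->
  essential_in H D -> H (c, r *+ n) -> exists a, a *+ n = c.
Proof.
move=> tA sH tfH [sD [C [sC [DC dec]]]] essD Hc.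
have tfD := essential_torsion_free_in sD essD tfH.
have Cc : C (c, 0).
  have [N [N0 cN]] := tA c.
  by apply: (torsion_in_complement sD sC DC (dec _) tfD N0); rewrite pairMnE cN mul0rn.
have [[da db] [[ca cb] [Dd [Cc1 [e1 e2]]]]] := dec (0, r).
have ca_ : ca = - da by apply/eqP; rewrite -addr_eq0 addrC -e1.
have cb_ : cb = r - db by rewrite e2 addrC addKr.
subst ca cb.
have Ddn := subgroupMn n sD Dd; rewrite pairMnE in Ddn.
have : (c, 0) + (- da, r - db) *+ n = 0.
  apply: DC; last by apply: subgroupD sC Cc (subgroupMn n sC Cc1).
  rewrite pairMnE pairD /= mulNrn mulrnBl add0r.
  exact: subgroupB sD (essD.1 _ Hc) Ddn.
rewrite pairMnE pairD => /(congr1 fst) /= /eqP; rewrite addr_eq0 => /eqP ->.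
by exists da; rewrite mulNrn opprK.
Qed.

Section Obstruction.
Variables (T R : zmodType) (x : nat -> R) (c : T) (n : nat).
Variables (lambda : {additive R -> rat}) (theta kappa : {additive R -> {poly rat}}).
Hypotheses (lambda0 : lambda (x 0) = n%:R^-1)
  (lambdaS : forall j, lambda (x j.+1) = 0) (theta0 : theta (x 0) = 0)
  (thetaS : forall j, theta (x j.+1) = odflt 0 (unpickle j))
  (kappaX : forall i, kappa (x i) = 'X^i).

Lemma kappa_span_inj y : span x y -> kappa y = 0 -> y = 0.
Proof.
move=> [N [k ->]]; rewrite additive_lincomb => kappa0.
have k0 i : (i < N)%N -> k i = 0.
  move=> iN; move/(congr1 (fun p : {poly rat} => p`_i)): kappa0.
  rewrite /lincomb coef_sum (bigD1 (Ordinal iN)) //= big1 => [|j].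
    by rewrite kappaX coefMrz coefXn eqxx addr0 coef0 => /eqP; rewrite intr_eq0 => /eqP.
  by rewrite -val_eqE /= kappaX coefMrz coefXn eq_sym => /negbTE ->; rewrite mul0rz.
by rewrite /lincomb big1 // => i _; rewrite k0 ?mulr0z.
Qed.

Let code (r : R) := pickle (kappa r - theta r).

Lemma theta_code r : theta (x (code r).+1) = kappa r - theta r.
Proof. by rewrite thetaS pickleK. Qed.

(* The shift by [x (code r).+1], on which [theta] takes the value [kappa r - theta r],
   puts the defect of [obstruction_map] into the subgroup and leaves [kappa (p.2 - q.2)]
   as the only obstruction to its injectivity modulo the subgroup. *)
Definition obstruction_subgroup (p : T * R) :=
  [/\ span x p.2, theta p.2 = 0 & exists k : int, p.1 = c *~ k /\ lambda p.2 = k%:~R].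

Definition obstruction_map (p : T * R) : T * R := (p.1, p.2 + x (code p.2).+1).

Lemma subgroup_obstruction : subgroup obstruction_subgroup.
Proof.
split.
  split=> /=; [exact: (subgroup0 (subgroup_span x)) | exact: raddf0 |].
  by exists 0; rewrite mulr0z raddf0.
move=> [p1 p2] [q1 q2] [/= sp thp [k [-> Lp]]] [/= sq thq [k' [-> Lq]]].
rewrite pairB; split=> /=.
- exact: subgroupB (subgroup_span x) sp sq.
- by rewrite raddfB thp thq subrr.
- by exists (k - k'); rewrite mulrzBr raddfB Lp Lq intrB.
Qed.

Lemma additive_mod_obstruction : additive_mod obstruction_subgroup obstruction_map.
Proof.
move=> [p1 p2] [q1 q2]; rewrite /obstruction_map !pairD /= subrr.
rewrite [p2 + _ + (q2 + _)]addrACA opprD addrACA subrr add0r.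
have sx := span_gen x; have sS := subgroup_span x.
split=> /=.
- by apply: subgroupB sS (sx _) (subgroupD sS (sx _) (sx _)).
- rewrite raddfB (raddfD theta) !theta_code (raddfD kappa) (raddfD theta).
  by rewrite [(kappa p2 - theta p2) + _]addrACA -opprD subrr.
- exists 0; split; first by rewrite mulr0z.
  by rewrite raddfB (raddfD lambda) !lambdaS addr0.
Qed.

Lemma injective_mod_obstruction : injective_mod obstruction_subgroup obstruction_map.
Proof.
move=> [p1 p2] [q1 q2]; rewrite /obstruction_map /= pairB => -[/= sw thw [k [ek Lk]]].
have sS := subgroup_span x.
have sd : span x (p2 - q2).
  rewrite -(addrK (x (code p2).+1 - x (code q2).+1) (p2 - q2)) -addrACA -opprD.
  exact: subgroupB sS sw (subgroupB sS (span_gen x _) (span_gen x _)).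
have kappa_d : kappa (p2 - q2) = 0.
  rewrite -thw (raddfB kappa) (raddfB theta) !(raddfD theta) !theta_code.
  by rewrite [theta p2 + _]addrC [theta q2 + _]addrC !subrK.
have /eqP := kappa_span_inj sd kappa_d; rewrite subr_eq0 => /eqP e2; subst q2.
move: Lk ek; rewrite subrr raddf0 => /esym/eqP; rewrite intr_eq0 => /eqP ->.
by rewrite mulr0z => /eqP; rewrite subr_eq0 => /eqP ->.
Qed.

Lemma torsion_free_in_obstruction : torsion_free R -> torsion_free_in obstruction_subgroup.
Proof.
move=> tfR [p1 p2] N [_ _ [k [/= -> Lk]]] N0; rewrite pairMnE /= => -[_ /(tfR _ _ N0) p20].
move: Lk; rewrite p20 raddf0 => /esym/eqP; rewrite intr_eq0 => /eqP ->.
by rewrite mulr0z.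
Qed.

Lemma obstruction_witness : (0 < n)%N -> obstruction_subgroup (c, x 0 *+ n).
Proof.
move=> n0; split=> /=.
- exact: subgroupMn (subgroup_span x) (span_gen x 0).
- by rewrite raddfMn theta0 mul0rn.
- exists 1; rewrite mulr1z raddfMn lambda0 -(mulr_natr n%:R^-1) mulVf //.
  by rewrite pnatr_eq0 -lt0n.
Qed.

End Obstruction.

Lemma semi_generalized_Bassian_divisible (T R : zmodType) :
  torsion_group T -> torsion_free R -> infinite_rank R ->
  semi_generalized_Bassian (T * R)%type -> divisible T.
Proof.
move=> tT tfR /(infinite_rank_independent_seq tfR) [x ix] sgb c n n0.
have divQ : divisible rat := @divisible_lmod _ rat^o.
have divQX : divisible {poly rat} := @divisible_lmod _ _.
have [lambda lambdaX] := independent_seq_extend (fun i => if i is 0 then n%:R^-1 else 0) ix divQ.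
have [theta thetaX] :=
  independent_seq_extend (fun i => if i is j.+1 then odflt 0 (unpickle j) else 0) ix divQX.
have [kappa kappaX] := independent_seq_extend (fun i => 'X^i) ix divQX.
have sH := subgroup_obstruction x c lambda theta.
have [D [sumD essD]] := sgb _ sH (ex_intro _ _ (conj
  (additive_mod_obstruction c kappa (fun j => lambdaX j.+1) (fun j => thetaX j.+1))
  (injective_mod_obstruction (fun j => thetaX j.+1) kappaX))).
apply: essential_summand_divides tT sH (torsion_free_in_obstruction tfR) sumD essD _.
exact: obstruction_witness (lambdaX 0) (thetaX 0) n0.
Qed.

Section FiniteRank.
Variables (T R : zmodType) (H : T * R -> Prop) (g : T * R -> T * R).
Hypotheses (tT : torsion_group T) (tfR : torsion_free R).
Hypotheses (sH : subgroup H) (gD : additive_mod H g) (gI : injective_mod H g).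

Lemma independent_snd_image m (r : 'I_m -> R) (k : 'I_m -> int) h (l : int) :
  independent r -> H h ->
  \sum_(j < m) (g (0, r j)).2 *~ k j + h.2 *~ l = 0 -> (forall j, k j = 0) /\ h.2 *~ l = 0.
Proof.
move=> [r0 ri] Hh sum0.
pose u := \sum_(j < m) g (0, r j) *~ k j + h *~ l.
have u2 : u.2 = 0.
  by rewrite -[RHS]sum0 raddfD raddf_sum raddfMz; under eq_bigr do rewrite raddfMz.
have [N [N0 uN]] := tT u.1.
have Hs : H (\sum_(j < m) g (0, r j) *~ (k j * N)).
  have uN0 : u *+ N = 0 by rewrite [u]surjective_pairing pairMnE uN u2 mul0rn.
  have -> : \sum_(j < m) g (0, r j) *~ (k j * N) = u *+ N - h *~ l *+ N.
    rewrite /u mulrnDl addrK -sumrMnl; apply: eq_bigr => j _.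
    by rewrite mulrzA pmulrn.
  rewrite uN0 sub0r.
  by apply: subgroupN sH _; apply: subgroupMn sH _; apply: subgroupMz.
have /(congr1 snd) := injective_mod_sum sH gD gI Hs; rewrite raddf_sum /=.
under eq_bigr do rewrite raddfMz /=.
move=> /ri rk; have k0 j : k j = 0.
  have /eqP := rk j; rewrite torsion_free_mulrz_eq0 // (negbTE (introN eqP (r0 j))) /=.
  by rewrite mulf_eq0 orbC eqz_nat eqn0Ngt N0 /= => /eqP.
split=> //; rewrite -[RHS]sum0 big1 ?add0r // => j _.
by rewrite k0 mulr0z.
Qed.

Lemma finite_rank_snd_eq0 : ~ infinite_rank R -> forall h, H h -> h.2 = 0.
Proof.
move=> nir h Hh; apply/eqP/negPn/negP => h2; apply: nir.
elim=> [|m [r ir]]; first by exists (fun _ => 0); split=> [[]|k _ []].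
pose f (i : 'I_m.+1) := if unlift ord_max i is Some j then (g (0, r j)).2 else h.2.
have lw j : lift ord_max j = widen_ord (leqnSn m) j by apply: val_inj; exact: lift_max.
have fw j : f (widen_ord (leqnSn m) j) = (g (0, r j)).2 by rewrite /f -lw liftK.
have fm : f ord_max = h.2 by rewrite /f unlift_none.
have coef k : \sum_(i < m.+1) f i *~ k i = 0 -> forall i, k i = 0.
  rewrite big_ord_recr fm /=; under eq_bigr do rewrite fw.
  move=> /(independent_snd_image ir Hh) [kw /eqP].
  rewrite torsion_free_mulrz_eq0 // (negbTE h2) /= => /eqP km i.
  by case: (unliftP ord_max i) => [j ->|->] //; rewrite lw kw.
exists f; split=> [i fi|k /coef k0 i]; last by rewrite k0 mulr0z.
have := coef (fun j => (j == i)%:R); rewrite (bigD1 i) //= eqxx mulr1z fi add0r big1.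
  by move=> /(_ erefl i); rewrite eqxx.
by move=> j /negbTE ->; rewrite mulr0z.
Qed.

End FiniteRank.

Lemma semi_generalized_Bassian_finite_rank (T R : zmodType) :
  torsion_group T -> torsion_free R -> ~ infinite_rank R ->
  semi_generalized_Bassian T -> semi_generalized_Bassian (T * R)%type.
Proof.
move=> tT tfR nir sgbT H sH [g [gD gI]].
have H2 := finite_rank_snd_eq0 tT tfR sH gD gI nir.
have g2 t : (g (t, 0)).2 = 0.
  have [N [N0 tN]] := tT t.
  have := H2 _ (subgroupB sH (additive_modMn sH gD (t, 0) N) (additive_mod0 sH gD)).
  rewrite pairMnE tN mul0rn -[(0, 0)]/(0 : T * R) !raddfB raddfMn addrAC subrr sub0r.
  by move=> /eqP; rewrite oppr_eq0 => /eqP /(tfR _ _ N0).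
pose gT t := (g (t, 0)).1.
have gTE t : g (t, 0) = (gT t, 0) by rewrite [g _]surjective_pairing g2.
have injT : inj_hom_into_quotient (fun t => H (t, 0)).
  exists gT; split=> [a b|a b].
    have := gD (a, 0) (b, 0); rewrite pairD add0r [X in H X]surjective_pairing.
    by rewrite (raddfB fst) (raddfB snd) (raddfD fst) (raddfD snd) /= !g2 addr0 subrr.
  move=> Hab; have /gI [] // : H (g (a, 0) - g (b, 0)).
  by rewrite [X in H X]surjective_pairing (raddfB fst) (raddfB snd) !gTE /= subrr.
have [DT [sumT essT]] := sgbT _ (subgroup_slicel sH) injT.
have -> : H = (fun p => H (p.1, 0) /\ p.2 = 0).
  apply/funext => -[t r]; apply/propext; split=> [Hp|[Ht /= ->] //].
  by have /= r0 := H2 _ Hp; rewrite -r0.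
exists (fun p => DT p.1 /\ p.2 = 0); split.
  exact: direct_summand_prod sumT (@direct_summand_eq0 R).
exact: essential_in_prodl sumT.1 essT.
Qed.

Lemma divisible_in_of_prime (G : zmodType) (E : G -> Prop) :
  (forall p e, prime p -> E e -> exists y, E y /\ y *+ p = e) -> divisible_in E.
Proof.
move=> Ep e n Ee n0; elim/ltn_ind: n e n0 Ee => n IH e n0 Ee.
have [n1|] := ltnP 1 n; last first.
  move=> n1; have -> : n = 1%N by apply/eqP; rewrite eqn_leq n1.
  by exists e; rewrite mulr1n.
have pp := pdiv_prime n1.
have [|y1 [Ey1 <-]] := IH _ (ltn_Pdiv (prime_gt1 pp) n0) e _ Ee.
  by rewrite divn_gt0 ?prime_gt0 // pdiv_leq.
have [y [Ey <-]] := Ep _ y1 pp Ey1.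
by exists y; rewrite -mulrnA mulnC divnK ?pdiv_dvd.
Qed.

Lemma divisible_in_of_coprime_torsion (G : zmodType) (E : G -> Prop) y e e0 (k : int) p :
  subgroup E -> y *+ p = e -> E e -> E e0 -> (e0 + y *~ k) *+ p = 0 -> coprime p `|k| ->
  exists y', E y' /\ y' *+ p = e.
Proof.
move=> sE ye Ee Ee0 zp0 cpk; set z := e0 + y *~ k in zp0.
have [u [v]] := Bezoutz k p.
have -> : gcdz k p = 1 by move/eqP: cpk; rewrite /gcdz absz_nat gcdnC => ->.
move=> uv.
have yk : y *~ k = z - e0 by rewrite /z addrC addKr.
have yp : y *~ p = e by rewrite -pmulrn ye.
exists (y - z *~ u); split.
  rewrite -{1}[y]mulr1z -uv mulrzDr -!mulrzA_C yk yp mulrzBl addrAC.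
  rewrite [z *~ u - _ - _]addrAC subrr add0r addrC.
  by apply: subgroupB sE (subgroupMz v sE Ee) (subgroupMz u sE Ee0).
by rewrite mulrnBl ye [z *~ u *+ p]pmulrn mulrzAC -pmulrn zp0 mul0rz subr0.
Qed.

Section EssentialHull.
Variables (T : zmodType) (S E : T -> Prop).
Hypotheses (divT : divisible T) (sE : subgroup E) (essSE : essential_in S E).
Hypothesis maxE : forall E', subgroup E' -> essential_in S E' ->
  (forall t, E t -> E' t) -> forall t, E' t -> E t.

Lemma maximal_essential_divisible_prime p e : prime p -> E e -> exists y, E y /\ y *+ p = e.
Proof.
move=> pp Ee; have [y ye] := divT e (prime_gt0 pp).
have [Ey|nEy] := pselect (E y); first by exists y.
(* [E + Z y] properly contains [E], so some nonzero [z = e0 + y *~ k] in it has no nonzero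
   multiple in [S]; then [p] cannot divide [k], and [z] is [p]-torsion. *)
have [SE ess] := (essential_inP _ sE).1 essSE.
pose E' w := exists e0 (k : int), E e0 /\ w = e0 + y *~ k.
have sE' : subgroup E'.
  split; first by exists 0, 0; rewrite mulr0z addr0; split=> //; exact: subgroup0.
  move=> _ _ [e1 [k1 [E1 ->]]] [e2 [k2 [E2 ->]]].
  by exists (e1 - e2), (k1 - k2); rewrite mulrzBr opprD addrACA; split=> //; exact: subgroupB.
have EE' w : E w -> E' w by exists w, 0; rewrite mulr0z addr0.
have [_ [[e0 [k [Ee0 ->]]] z0 zS]] :
    exists z, [/\ E' z, z <> 0 & forall j, S (z *~ j) -> z *~ j = 0].
  apply: contrapT => none; apply: nEy; apply: (maxE sE' _ EE').
    apply/(essential_inP _ sE'); split=> [w /SE /EE' //|w E'w w0].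
    apply: contrapT => nw; apply: none; exists w; split=> // j Sj.
    by apply: contrapT => wj; apply: nw; exists j.
  by exists 0, 1; rewrite add0r mulr1z; split=> //; exact: subgroup0.
set z := e0 + y *~ k in z0 zS *.
have noS w : E w -> (exists j, w = z *~ j) -> w = 0.
  move=> Ew [j wz]; rewrite wz in Ew *; apply: contrapT => w0.
  have [i [Si i0]] := ess _ Ew w0.
  by apply: i0; rewrite -mulrzA zS // mulrzA.
have pk : ~~ (p%:Z %| k)%Z.
  apply/negP => /dvdzP [q kq]; apply: z0; apply: noS; last by exists 1; rewrite mulr1z.
  rewrite /z kq mulrzA mulrzAC -pmulrn ye.
  by apply: subgroupD sE Ee0 (subgroupMz q sE Ee).
have zp0 : z *+ p = 0.
  apply: noS; last by exists p; rewrite pmulrn.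
  rewrite /z mulrnDl [y *~ k *+ p]pmulrn mulrzAC -pmulrn ye.
  by apply: subgroupD sE (subgroupMn p sE Ee0) (subgroupMz k sE Ee).
apply: (divisible_in_of_coprime_torsion sE ye Ee Ee0 zp0).
by rewrite prime_coprime //; move: pk; rewrite dvdzE absz_nat.
Qed.

End EssentialHull.

Lemma divisible_essential_hull (T : zmodType) (S : T -> Prop) : divisible T -> subgroup S ->
  exists E, [/\ subgroup E, divisible_in E & essential_in S E].
Proof.
move=> divT sS.
have essS : essential_in S S.
  by apply/(essential_inP _ sS); split=> // x Sx x0; exists 1; rewrite mulr1z.
have [F FP nF tot|E [[sE essE] maxE]] :=
    @Zorn_chain_union T (fun X => subgroup X /\ essential_in S X) S (conj sS essS).
  have sU := subgroup_chain_union (fun X FX => (FP X FX).1) nF tot.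
  split=> //; apply/(essential_inP _ sU); split.
    by case: nF => X FX t St; exists X; split=> //; exact: (FP X FX).2.1.
  move=> t [X [FX Xt]] t0; have [sX eX] := FP X FX.
  by have [_ ess] := (essential_inP _ sX).1 eX; apply: ess.
exists E; split=> //; apply: divisible_in_of_prime => p e pp Ee.
exact: (maximal_essential_divisible_prime divT sE essE
  (fun E' sE' eE' EE' => maxE E' (conj sE' eE') EE') pp Ee).
Qed.

Lemma divisible_retraction (T : zmodType) (E : T -> Prop) : subgroup E -> divisible_in E ->
  exists pi : {additive T -> T}, (forall t, E (pi t)) /\ (forall t, E t -> pi t = t).
Proof.
move=> sE divE.
have [|F [FE FM0]] := @Baer_extension T T E sE divE (fun p => E p.1 /\ p.2 = p.1).
  split=> [|d [_ //]|p [Ep ->] //].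
  split=> [|p q [Ep ep] [Eq eq]]; first by split=> //; exact: subgroup0.
  by split; [exact: subgroupB | rewrite !raddfB /= ep eq].
by exists F; split=> // t Et; apply: (FM0 (t, t)).
Qed.

Lemma essential_in_by_fibres (A B : zmodType) (H D : A * B -> Prop) :
  torsion_free B -> subgroup H -> subgroup D -> (forall p, H p -> D p) ->
  (forall a, D (a, 0) -> a <> 0 -> exists k : int, H (a *~ k, 0) /\ a *~ k <> 0) ->
  (forall p, D p -> p.2 <> 0 -> exists (k : int) a, H (a, p.2 *~ k) /\ p.2 *~ k <> 0) ->
  essential_in H D.
Proof.
move=> tfB sH sD HD ess1 ess2; apply/(essential_inP _ sD); split=> // -[t r] Dp p0.
have [r0|/eqP r0] := eqVneq r 0.
  subst r; have t0 : t <> 0 by move=> t0; apply: p0; rewrite t0.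
  by have [k [Hk k0]] := ess1 t Dp t0; exists k; rewrite pairMzE mul0rz; split=> // -[].
have [j [s [Hs rj0]]] := ess2 _ Dp r0.
have Dd : D (t *~ j - s, 0).
  have := subgroupB sD (subgroupMz j sD Dp) (HD _ Hs).
  by rewrite pairMzE pairB subrr.
have [d0|/eqP d0] := eqVneq (t *~ j - s) 0.
  exists j; rewrite pairMzE; split=> [|[_ //]].
  by move/eqP: d0; rewrite subr_eq0 => /eqP ->.
have [i [Hi i0]] := ess1 _ Dd d0.
exists (j * i); rewrite pairMzE !mulrzA; split.
  have := subgroupD sH (subgroupMz i sH Hs) Hi.
  by rewrite pairMzE pairD mulrzBl addrC subrK addr0.
case=> _ /eqP; rewrite torsion_free_mulrz_eq0 // => /orP [/eqP //|/eqP i00].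
by apply: i0; rewrite i00 mulr0z.
Qed.

Lemma inj_hom_into_quotient_proj2 (T R : zmodType) (H : T * R -> Prop) :
  torsion_group T -> torsion_free R -> subgroup H -> inj_hom_into_quotient H ->
  inj_hom_into_quotient (fun r => exists t, H (t, r)).
Proof.
move=> tT tfR sH [g [gD gI]]; exists (fun r => (g (0, r)).2); split=> [a b|a b [t Ht]].
  exists (g (0, a + b) - (g (0, a) + g (0, b))).1.
  by have := gD (0, a) (0, b); rewrite pairD add0r [X in H X -> _]surjective_pairing.
pose w := g (0, a) - g (0, b).
have [N [N0 tN]] := tT (w.1 - t).
have HwN : H (w *+ N).
  have -> : w *+ N = (t, w.2) *+ N + (w.1 - t, 0) *+ N.
    by rewrite -mulrnDl pairD addrC subrK addr0 -surjective_pairing.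
  by rewrite [(w.1 - t, 0) *+ N]pairMnE tN mul0rn addr0; apply: subgroupMn.
have := subgroupD sH (subgroupB sH (additive_modMn sH gD (0, a) N)
  (additive_modMn sH gD (0, b) N)) HwN.
rewrite /w mulrnBl opprB -addrA [g (0, b) *+ N - _ + _]addrC !subrKA.
move=> /gI; rewrite !pairMnE => -[/eqP]; rewrite -subr_eq0 -mulrnBl => /eqP /(tfR _ _ N0).
by move=> /eqP; rewrite subr_eq0 => /eqP.
Qed.

Section ShearedSummand.
Variables (T R : zmodType) (H : T * R -> Prop) (E : T -> Prop) (ER : R -> Prop).
Variables (pi : {additive T -> T}) (alpha : {additive R -> T}).
Hypotheses (tfR : torsion_free R) (sH : subgroup H) (sE : subgroup E).
Hypothesis sumER : direct_summand ER.
Hypotheses (piE : forall t, E (pi t)) (piK : forall t, E t -> pi t = t).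
Hypotheses (alpha_ker : forall r, pi (alpha r) = 0)
  (alphaH : forall t r, H (t, r) -> alpha r = t - pi t).
Hypotheses (essE : essential_in (fun t => H (t, 0)) E)
  (essER : essential_in (fun r => exists t, H (t, r)) ER).

(* The image of [E * ER] under the shear [(t, r) |-> (t + alpha r, r)]. *)
Definition sheared_summand (p : T * R) := ER p.2 /\ E (p.1 - alpha p.2).

Lemma subgroup_sheared_summand : subgroup sheared_summand.
Proof.
have sER := sumER.1; split.
  rewrite /sheared_summand; split; first exact: (subgroup0 sER).
  by rewrite [_.1]/(0 : T) [_.2]/(0 : R) raddf0 subrr; exact: subgroup0.
move=> [t r] [t' r'] [/= ERr Et] [/= ERr' Et']; rewrite pairB /sheared_summand; split=> /=.
  exact: subgroupB.
by rewrite raddfB subrACA; exact: subgroupB.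
Qed.

Lemma direct_summand_sheared : direct_summand sheared_summand.
Proof.
have [sER [FR [sFR [EF decR]]]] := sumER.
split; first exact: subgroup_sheared_summand.
exists (fun p => pi p.1 = 0 /\ FR p.2); split.
  split=> [|[t r] [t' r'] [/= pt Fr] [/= pt' Fr']].
    by split; [exact: raddf0 | exact: subgroup0].
  by split=> /=; [rewrite raddfB pt pt' subrr | exact: subgroupB].
split=> [[t r] [/= ERr Et] [/= pt FRr]|[t r]].
  have r0 : r = 0 by exact: EF.
  subst r; move: Et => /=; rewrite raddf0 subr0 => /piK; rewrite pt => t0.
  by rewrite -t0.
have [e [f [ERe [FRf ->]]]] := decR r.
exists (pi t + alpha e, e), (t - pi t - alpha e, f); split.
  by split=> //=; rewrite addrK.
split; last by rewrite pairD -[t - _ - _]addrA -opprD [pi t + _ + _]addrC subrK.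
by split=> //=; rewrite !(raddfB pi) alpha_ker (piK (piE t)) subrr subr0.
Qed.

Lemma essential_in_sheared : essential_in H sheared_summand.
Proof.
have sD := subgroup_sheared_summand.
have HD p : H p -> sheared_summand p.
  case: p => t r Hp; split; first by apply: essER.1; exists t.
  by rewrite /= (alphaH Hp) opprB addrC subrK; exact: piE.
apply: (@essential_in_by_fibres T R H sheared_summand tfR sH sD HD).
  move=> t [_ /=].
  rewrite raddf0 subr0 => Et t0.
  have [_ ess] := (essential_inP _ sE).1 essE.
  by have [k [Hk k0]] := ess t Et t0; exists k.
move=> [t r] [/= ERr _] r0; have [_ ess] := (essential_inP _ sumER.1).1 essER.
by have [k [[a Ha] k0]] := ess r ERr r0; exists k, a.
Qed.

End ShearedSummand.

Lemma semi_generalized_Bassian_divisible_torsion (T R : zmodType) :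
  torsion_group T -> torsion_free R -> divisible T ->
  semi_generalized_Bassian R -> semi_generalized_Bassian (T * R)%type.
Proof.
move=> tT tfR divT sgbR H sH injH.
have [ER [sumER essER]] :=
  sgbR _ (subgroup_proj2 sH) (inj_hom_into_quotient_proj2 tT tfR sH injH).
have [E [sE divE essE]] := divisible_essential_hull divT (subgroup_slicel sH).
have [pi [piE piK]] := divisible_retraction sE divE.
have sM : subgroup (fun t => pi t = 0).
  by split=> [|a b pa pb]; [exact: raddf0 | rewrite raddfB pa pb subrr].
have divM : divisible_in (fun t => pi t = 0).
  move=> d n pd n0; have [t tn] := divT d n n0.
  exists (t - pi t); split; first by rewrite /= raddfB (piK _ (piE t)) subrr.
  by rewrite mulrnBl -raddfMn tn pd subr0.
have [|alpha [alpha_ker alphaH]] := @Baer_extension R T _ sM divM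
    (fun p => exists t, H (t, p.1) /\ p.2 = t - pi t).
  split.
  - split=> [|[r d] [r' d'] [t [Ht /= ->]] [t' [Ht' /= ->]]].
      by exists 0; rewrite raddf0 subrr; split=> //; exact: (subgroup0 sH).
    by exists (t - t'); split; [exact: (subgroupB sH Ht Ht') | rewrite (raddfB pi) subrACA].
  - by move=> d [t [Ht0 /= ->]]; rewrite piK ?subrr //; exact: essE.1.
  - by move=> _ [t [_ /= ->]]; rewrite /= (raddfB pi) (piK _ (piE t)) subrr.
have alphaH' t r : H (t, r) -> alpha r = t - pi t.
  by move=> Ht; exact: (alphaH (r, t - pi t) (ex_intro _ t (conj Ht erefl))).
exists (sheared_summand E ER alpha); split.
  exact: direct_summand_sheared.
exact: essential_in_sheared.
Qed.

Theorem proposition2p13 (T R : zmodType) :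
  torsion_group T -> torsion_free R ->
  (semi_generalized_Bassian (T * R)%type <->
   (semi_generalized_Bassian T /\ semi_generalized_Bassian R /\
    (infinite_rank R -> divisible T))).
Proof.
move=> tT tfR; split=> [sgb|[sgbT [sgbR divT]]].
  split; first exact: semi_generalized_Bassian_prodl tfR sgb.
  split; first exact: semi_generalized_Bassian_prodr tT tfR sgb.
  by move=> ir; exact: semi_generalized_Bassian_divisible tT tfR ir sgb.
have [ir|nir] := pselect (infinite_rank R).
  exact: semi_generalized_Bassian_divisible_torsion tT tfR (divT ir) sgbR.
exact: semi_generalized_Bassian_finite_rank tT tfR nir sgbT.
Qed.
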